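(* Let $R$ be a Krull domain whose divisor class group $Cl(R)$ is not torsion. Then there exist a height-one prime ideal $P$ of $R$ whose class in $Cl(R)$ has infinite order, and an irreducible element $x\in P$, such that $x^2$ factors uniquely.
   Context: A nonzero nonunit $w$ of a domain $R$ factors uniquely if whenever $w=\alpha_1\cdots\alpha_n=\beta_1\cdots\beta_m$ with all $\alpha_i,\beta_j$ irreducible, then $m=n$ and after reordering, $\alpha_i=u_i\beta_i$ for units $u_i$. *)

From HB Require Import structures.
From mathcomp Require Import all_boot all_order all_algebra.
From mathcomp Require Import fraction.
Set Implicit Arguments. Unset Strict Implicit. Unset Printing Implicit Defensive.
Import Order.TTheory GRing.Theory Num.Theory.
Local Open Scope ring_scope.

Section Krull.
Variable R : idomainType.

Definition K := {fraction R}.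
Definition emb (x : R) : K := FracField.tofrac x.

Definition prime_ideal (P : R -> Prop) : Prop :=
  [/\ P 0,
      (forall a b, P a -> P b -> P (a + b)),
      (forall a b, P b -> P (a * b)),
      ~ P 1 &
      (forall a b, P (a * b) -> P a \/ P b)].

Definition same_ideal (P Q : R -> Prop) : Prop := forall y, P y <-> Q y.

Definition height_one (P : R -> Prop) : Prop :=
  [/\ prime_ideal P,
      (exists y, y != 0 /\ P y) &
      (forall Q, prime_ideal Q -> (forall y, Q y -> P y) ->
         (exists y, y != 0 /\ Q y) -> forall y, P y -> Q y)].

Definition loc (P : R -> Prop) (z : K) : Prop :=
  exists a b : R, ~ P b /\ z = emb a / emb b.

Definition unit_in (V : K -> Prop) (u : K) : Prop :=
  [/\ V u, u != 0 & V u^-1].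

(* t is a uniformizer of V (V is then a discrete valuation ring with
   fraction field K): t is a nonzero nonunit of V and every nonzero
   element of K is a unit of V times an integer power of t. *)
Definition uniformizer (V : K -> Prop) (t : K) : Prop :=
  [/\ V t, t != 0, ~ unit_in V t &
      forall z : K, z != 0 -> exists (u : K) (n : int), unit_in V u /\ z = u * t ^ n].

Definition DVR (V : K -> Prop) : Prop := exists t, uniformizer V t.

(* Krull domain: R = intersection of the R_P over height-one primes,
   each R_P is a DVR, and every nonzero element lies in only finitely
   many height-one primes. *)
Definition krull_domain : Prop :=
  [/\ (forall P, height_one P -> DVR (loc P)),
      (forall z : K, (forall P, height_one P -> loc P z) -> exists r : R, z = emb r) &
      (forall x : R, x != 0 -> exists s : seq (R -> Prop),
         forall P, height_one P -> P x -> exists Q, (exists i, (i < size s)%N /\ Q = nth (fun _ => False) s i) /\ same_ideal P Q)].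

Definition vP (P : R -> Prop) (z : K) (n : int) : Prop :=
  exists t u, [/\ uniformizer (loc P) t, unit_in (loc P) u & z = u * t ^ n].

(* Weil divisors: finitely supported integer functions on height-one primes
   (invariant under extensional equality of ideals). *)
Definition divisor (D : (R -> Prop) -> int) : Prop :=
  [/\ (forall P Q, same_ideal P Q -> D P = D Q),
      (forall P, D P != 0 -> height_one P) &
      (exists s : seq (R -> Prop), forall P, D P != 0 ->
          exists Q, (exists i, (i < size s)%N /\ Q = nth (fun _ => False) s i) /\ same_ideal P Q)].

Definition principal (D : (R -> Prop) -> int) : Prop :=
  exists z : K, z != 0 /\ forall Q, height_one Q -> vP Q z (D Q).

Definition cl_torsion : Prop :=
  forall D, divisor D -> exists n : nat, (0 < n)%N /\ principal (fun Q => D Q * n%:Z).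

Definition multiple_principal (P : R -> Prop) (n : int) : Prop :=
  exists z : K, [/\ z != 0, vP P z n &
    forall Q, height_one Q -> ~ same_ideal Q P -> vP Q z 0].

Definition infinite_order_class (P : R -> Prop) : Prop :=
  forall n : nat, (0 < n)%N -> ~ multiple_principal P n%:Z.

Definition irreducible_elt (x : R) : Prop :=
  [/\ x != 0, x \isn't a GRing.unit &
      forall a b, x = a * b -> a \is a GRing.unit \/ b \is a GRing.unit].

Definition factors_uniquely (w : R) : Prop :=
  [/\ w != 0, w \isn't a GRing.unit &
  forall s t : seq R, (forall a, a \in s -> irreducible_elt a) ->
    (forall b, b \in t -> irreducible_elt b) ->
    \prod_(a <- s) a = w -> \prod_(b <- t) b = w ->
    size s = size t /\
    exists t', perm_eq t t' /\
      forall i, (i < size s)%N -> exists u, u \is a GRing.unit /\ nth 0 s i = u * nth 0 t' i].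

End Krull.

From HB Require Import structures.
From mathcomp Require Import all_boot all_order all_algebra fraction zify.
From mathcomp Require Import boolp.
Set Implicit Arguments. Unset Strict Implicit. Unset Printing Implicit Defensive.
Import Order.TTheory GRing.Theory Num.Theory.
Local Open Scope ring_scope.

(* If every height-one prime had a class of finite order, every divisor, being a
   finite combination of height-one primes, would have a principal multiple; so
   some height-one prime P has a class of infinite order. The element x can then
   be found in any height-one prime P.
   Pick y in P whose support (the set of height-one primes containing it) is
   minimal among the nonzero elements of P. Let r have support inside supp y and
   let Q1 maximise the ratio v_Q(r) / v_Q(y) over Q in supp y. Then
   y^(v_Q1 r) / r^(v_Q1 y) has nonnegative valuations, so it lies in R, and it
   avoids Q1; by minimality of supp y it also avoids P, i.e. the ratio at P is the
   maximum. Likewise it is the minimum, so v(r) is proportional to v(y) on supp y.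
   Now take x with supp x inside supp y and v_P(x) > 0 minimal: dividing v_P(r)
   by v_P(x) with remainder shows that every such r is a unit times a power of x.
   Divisors of powers of x are such elements r, hence x is irreducible and every
   factorization of x^n into irreducibles consists of n associates of x. *)

Lemma exists_minimizer (T : Type) (Y : T -> Prop) (f : T -> nat) :
  (exists c, Y c) -> exists c, Y c /\ forall c', Y c' -> (f c <= f c')%N.
Proof.
move=> [c Yc]; have exP : exists n, `[< exists c, Y c /\ f c = n >].
  by exists (f c); apply/asboolP; exists c.
case: (ex_minnP exP) => n /asboolP [c' [Yc' <-]] f_min.
by exists c'; split=> // c'' Yc''; apply: f_min; apply/asboolP; exists c''.
Qed.

Lemma ler_int_ratio (a b c d : int) : 0 < b -> 0 < d ->
  ((a%:~R / b%:~R : rat) <= c%:~R / d%:~R) = (a * d <= c * b).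
Proof.
move=> b_gt0 d_gt0.
by rewrite ler_pdivrMr ?ltr0z // mulrAC ler_pdivlMr ?ltr0z // -!intrM ler_int.
Qed.

Lemma prod_associates (R : comUnitRingType) (x : R) (s : seq R) :
  (forall a, a \in s -> exists2 u, u \is a GRing.unit & a = u * x) ->
  exists2 U, U \is a GRing.unit & \prod_(a <- s) a = U * x ^+ size s.
Proof.
elim: s => [|a s IHs] assoc; first by exists 1; rewrite ?unitr1 ?big_nil ?mul1r.
have [u uu ->] := assoc a (mem_head a s); rewrite big_cons.
have [|U uU ->] := IHs; first by move=> b bs; apply: assoc; rewrite inE bs orbT.
by exists (u * U); rewrite ?unitrM ?uu // exprS mulrACA.
Qed.

Definition power_rigid (R : unitRingType) (x : R) : Prop :=
  forall a b n, a * b = x ^+ n -> exists u (q : nat), u \is a GRing.unit /\ a = u * x ^+ q.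

Section PowerRigid.
Variables (R : idomainType) (x : R).
Hypotheses (x0 : x != 0) (x_nunit : x \isn't a GRing.unit) (x_rigid : power_rigid x).

Lemma unit_expr_inj (c : R) (m k : nat) :
  c \is a GRing.unit -> x ^+ m = c * x ^+ k -> m = k.
Proof.
move=> uc; case: (ltngtP m k) => // [lt_mk | lt_km].
  rewrite -(subnK (ltnW lt_mk)) exprD mulrA -{1}[x ^+ m]mul1r.
  move/(mulIf (expf_neq0 m x0)) => e1; case/negP: x_nunit.
  by rewrite -(unitrX_pos x (_ : 0 < k - m)%N) ?subn_gt0 // -(unitrMr _ uc) -e1 unitr1.
rewrite -(subnK (ltnW lt_km)) exprD => /(mulIf (expf_neq0 k x0)) e1.
by case/negP: x_nunit; rewrite -(unitrX_pos x (_ : 0 < m - k)%N) ?subn_gt0 // e1.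
Qed.

Lemma rigid_irreducible : irreducible_elt x.
Proof.
split=> // a b ex.
have [u [p [uu ea]]] := x_rigid (esym ex : a * b = x ^+ 1).
have [w [q [uw eb]]] := x_rigid (esym (etrans ex (mulrC a b)) : b * a = x ^+ 1).
have /unit_expr_inj : x ^+ 1 = (u * w) * x ^+ (p + q) by rewrite {1}ex ea eb exprD mulrACA.
rewrite unitrM uu uw => /(_ isT) pq1.
case: p pq1 ea => [|p] pq1 ea; first by left; rewrite ea expr0 mulr1.
by right; rewrite eb (_ : q = 0%N) ?expr0 ?mulr1 //; lia.
Qed.

Lemma irreducible_dvd_rigid a b n : irreducible_elt a -> a * b = x ^+ n ->
  exists2 u, u \is a GRing.unit & a = u * x.
Proof.
move=> [a0 a_nunit a_irr] /x_rigid [u [q [uu ea]]].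
case: q ea => [|[|q]] ea.
- by case/negP: a_nunit; rewrite ea expr0 mulr1.
- by exists u.
- have /a_irr [] : a = (u * x ^+ q.+1) * x by rewrite ea exprSr mulrA.
    by rewrite unitrM uu unitrX_pos // (negPf x_nunit).
  by rewrite (negPf x_nunit).
Qed.

Lemma rigid_factorization n (s : seq R) : (forall a, a \in s -> irreducible_elt a) ->
  \prod_(a <- s) a = x ^+ n ->
  size s = n /\ forall a, a \in s -> exists2 u, u \is a GRing.unit & a = u * x.
Proof.
move=> s_irr es.
have assoc a : a \in s -> exists2 u, u \is a GRing.unit & a = u * x.
  move=> a_s; apply: (@irreducible_dvd_rigid _ (\prod_(b <- rem a s) b) n).
    exact: s_irr.
  by rewrite -es (big_rem a a_s).
split=> //; have [U uU eU] := prod_associates assoc.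
by apply/esym/(unit_expr_inj uU); rewrite -eU.
Qed.

Lemma rigid_factors_uniquely n : (0 < n)%N -> factors_uniquely (x ^+ n).
Proof.
move=> n_gt0; split; [by rewrite expf_neq0 | by rewrite unitrX_pos |].
move=> s t s_irr t_irr es et.
have [[ss s_assoc] [st t_assoc]] := (rigid_factorization s_irr es, rigid_factorization t_irr et).
split; first by rewrite ss st.
exists t; split=> // i lt_is.
have lt_it : (i < size t)%N by rewrite st -ss.
have [[u uu ->] [w uw ->]] := (s_assoc _ (mem_nth 0 lt_is), t_assoc _ (mem_nth 0 lt_it)).
by exists (u / w); rewrite ?unitrM ?unitrV ?uu // mulrA divrK.
Qed.

End PowerRigid.

Section Localization.
Variable R : idomainType.
Local Notation KR := (K R).

Lemma same_ideal_eq (P Q : R -> Prop) : same_ideal P Q -> P = Q.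
Proof. by move=> PQ; apply: funext => y; apply: propext. Qed.

Lemma embM (a b : R) : emb (a * b) = emb a * emb b.
Proof. exact: tofracM. Qed.

Lemma emb1 : emb (1 : R) = 1.
Proof. exact: tofrac1. Qed.

Lemma emb_eq0 (a : R) : (emb a == 0) = (a == 0).
Proof. exact: tofrac_eq0. Qed.

Lemma embX (a : R) n : emb (a ^+ n) = emb a ^+ n.
Proof. exact: tofracXn. Qed.

Lemma emb_inj : injective (@emb R).
Proof. by move=> a b /eqP; rewrite tofrac_eq => /eqP. Qed.

Section PrimeIdeal.
Variable Q : R -> Prop.
Hypothesis pQ : prime_ideal Q.

Lemma prime_idealMr a b : Q a -> Q (a * b).
Proof. by case: pQ => _ _ Qmul _ _ Qa; rewrite mulrC; apply: Qmul. Qed.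

Lemma prime_ideal_nunit a : Q a -> a \isn't a GRing.unit.
Proof.
by case: pQ => _ _ Qmul Q1 _ Qa; apply/negP => ua; apply: Q1; rewrite -(mulVr ua); apply: Qmul.
Qed.

Lemma prime_idealX a n : Q (a ^+ n) -> Q a.
Proof.
case: pQ => _ _ _ Q1 Qprime; elim: n => [|n IHn]; first by rewrite expr0.
by rewrite exprS => /Qprime [].
Qed.

Lemma loc_emb r : loc Q (emb r).
Proof. by case: pQ => _ _ _ Q1 _; exists r, 1; rewrite emb1 invr1 mulr1. Qed.

Lemma loc_emb_inv r : ~ Q r -> loc Q (emb r)^-1.
Proof. by move=> Qr; exists 1, r; rewrite emb1 mul1r. Qed.

Lemma loc_emb_inv_nmem r : r != 0 -> loc Q (emb r)^-1 -> ~ Q r.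
Proof.
move=> r0 [a [b [Qb er_inv]]] Qr.
have [er0 b0] : emb r != 0 /\ emb b != 0.
  by rewrite !emb_eq0; split=> //; apply/eqP => b0; apply: Qb; rewrite b0; case: pQ.
suff eb : b = r * a by apply: Qb; rewrite eb; apply: prime_idealMr.
apply: emb_inj; rewrite embM mulrC.
have := congr1 (fun z => z * emb b * emb r) er_inv.
by rewrite mulrAC mulVf // mul1r divfK.
Qed.

Lemma loc1 : loc Q 1.
Proof. by rewrite -emb1; apply: loc_emb. Qed.

Lemma locM a b : loc Q a -> loc Q b -> loc Q (a * b).
Proof.
case: pQ => _ _ _ _ Qprime [a1 [b1 [nb1 ->]]] [a2 [b2 [nb2 ->]]].
exists (a1 * a2), (b1 * b2); split; first by case/Qprime.
by rewrite !embM invfM mulrACA.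
Qed.

Lemma locX a n : loc Q a -> loc Q (a ^+ n).
Proof.
move=> la; elim: n => [|n IHn]; first by rewrite expr0; apply: loc1.
by rewrite exprS; apply: locM.
Qed.

Lemma unit_in1 : unit_in (loc Q) 1.
Proof. by split; rewrite ?invr1 ?oner_neq0 //; apply: loc1. Qed.

Lemma unit_inM a b : unit_in (loc Q) a -> unit_in (loc Q) b -> unit_in (loc Q) (a * b).
Proof. by case=> la a0 lai [lb b0 lbi]; split; rewrite ?invfM ?mulf_neq0 //; apply: locM. Qed.

Lemma unit_inV a : unit_in (loc Q) a -> unit_in (loc Q) a^-1.
Proof. by case=> la a0 lai; split; rewrite ?invr_eq0 ?invrK. Qed.

Lemma unit_inX a n : unit_in (loc Q) a -> unit_in (loc Q) (a ^+ n).
Proof.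
move=> ua; elim: n => [|n IHn]; first by rewrite expr0; apply: unit_in1.
by rewrite exprS; apply: unit_inM.
Qed.

Lemma unit_inXz a (n : int) : unit_in (loc Q) a -> unit_in (loc Q) (a ^ n).
Proof.
case: n => n ua; first by rewrite -exprnP; apply: unit_inX.
by rewrite NegzE -exprnN; apply/unit_inV/unit_inX.
Qed.

Section Uniformizer.
Variable t : KR.
Hypothesis ut : uniformizer (loc Q) t.

Lemma loc_unit_expz u (n : int) :
  unit_in (loc Q) u -> loc Q (u * t ^ n) <-> 0 <= n.
Proof.
case: ut => lt t0 nut _ [lu u0 lui]; split; last first.
  by case: n => // n _; rewrite -exprnP; apply: locM => //; apply: locX.
case: n => // n lutn; exfalso; apply: nut; split => //.
have -> : t^-1 = t ^+ n * (u^-1 * (u * t ^ Negz n)).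
  rewrite mulKf // NegzE -exprnN exprSr invfM mulrA.
  by rewrite mulfV ?mul1r // expf_neq0.
by apply: locM; [apply: locX | apply: locM].
Qed.

Lemma unit_in_expz (n : int) : unit_in (loc Q) (t ^ n) -> n = 0.
Proof.
case: (ut) => _ t0 _ _ [ltn _ ltni].
have /(loc_unit_expz _ unit_in1) n_ge0 : loc Q (1 * t ^ n) by rewrite mul1r.
have /(loc_unit_expz _ unit_in1) : loc Q (1 * t ^ (- n)) by rewrite mul1r -invr_expz.
lia.
Qed.

Lemma unit_expz_inj u u' (n m : int) : unit_in (loc Q) u -> unit_in (loc Q) u' ->
  u * t ^ n = u' * t ^ m -> n = m.
Proof.
case: (ut) => _ t0 _ _ uu uu' e; apply/eqP; rewrite -subr_eq0; apply/eqP.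
apply: unit_in_expz; suff -> : t ^ (n - m) = u^-1 * u' by apply/unit_inM/uu'/unit_inV.
have [[_ u0 _] tm0] := (uu, expfz_neq0 m t0).
rewrite expfzDr // -invr_expz; apply: (canLR (mulfK tm0)).
by rewrite -mulrA -e mulKf.
Qed.

End Uniformizer.

Lemma vP_uniq z n m : vP Q z n -> vP Q z m -> n = m.
Proof.
move=> [t [u [ut uu ->]]] [t' [u' [ut' uu' ez]]].
have [lt t0 _ ht] := ut; have [lt' t'0 _ ht'] := ut'.
have [w [k [uw et']]] := ht t' t'0; have [w' [j [uw' et]]] := ht' t t0.
have k_ge0 : 0 <= k by apply/(loc_unit_expz ut k uw); rewrite -et'.
have j_ge0 : 0 <= j by apply/(loc_unit_expz ut' j uw'); rewrite -et.
have /esym kj : 1 = k * j.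
  apply: (unit_expz_inj ut unit_in1 (unit_inM uw' (unit_inXz j uw))).
  by rewrite mul1r expr1z {1}et et' expfzMl exprz_exp mulrA.
have k1 : k = 1.
  have [k0 j0] : k != 0 /\ j != 0.
    by split; apply: contra_eq_neq kj => ->; rewrite ?mul0r ?mulr0.
  nia.
apply: (unit_expz_inj ut uu (unit_inM uu' (unit_inXz m uw))).
by rewrite ez et' k1 expr1z expfzMl mulrA.
Qed.

End PrimeIdeal.

(* The valuation v_Q(z), with junk value 0 when [vP Q z] determines none (e.g. z = 0). *)
Definition ord (Q : R -> Prop) (z : KR) : int :=
  if pselect (exists n, vP Q z n) is left h then sval (cid h) else 0.

Definition ordR (Q : R -> Prop) (r : R) : int := ord Q (emb r).

End Localization.

Section KrullDomain.
Variable R : idomainType.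
Hypothesis kr : krull_domain R.
Local Notation KR := (K R).

Lemma height_one_prime (Q : R -> Prop) : height_one Q -> prime_ideal Q.
Proof. by case. Qed.

Section Valuation.
Variable Q : R -> Prop.
Hypothesis hQ : height_one Q.
Let pQ : prime_ideal Q := height_one_prime hQ.
Let dvrQ : DVR (loc Q). Proof. by case: kr => /(_ Q hQ). Qed.

Lemma ord_vP z n : vP Q z n -> ord Q z = n.
Proof.
rewrite /ord => zn; case: pselect => [h|[]]; last by exists n.
exact: (vP_uniq pQ (svalP (cid h)) zn).
Qed.

Lemma ord_unit_expz t u n : uniformizer (loc Q) t -> unit_in (loc Q) u ->
  ord Q (u * t ^ n) = n.
Proof. by move=> ut uu; apply: ord_vP; exists t, u. Qed.

Lemma ord_spec t z : uniformizer (loc Q) t -> z != 0 ->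
  exists2 u, unit_in (loc Q) u & z = u * t ^ ord Q z.
Proof.
move=> ut z0; have [_ _ _ /(_ z z0) [u [n [uu ez]]]] := ut.
by exists u; rewrite // {2}ez ord_unit_expz.
Qed.

Lemma vP_ord z : z != 0 -> vP Q z (ord Q z).
Proof.
by move=> z0; have [t ut] := dvrQ; have [u uu ez] := ord_spec ut z0; exists t, u.
Qed.

Lemma ord1 : ord Q 1 = 0.
Proof.
have [t ut] := dvrQ.
by rewrite -(ord_unit_expz 0 ut (unit_in1 pQ)) expr0z mulr1.
Qed.

Lemma ordM a b : a != 0 -> b != 0 -> ord Q (a * b) = ord Q a + ord Q b.
Proof.
move=> a0 b0; have [t ut] := dvrQ; have [_ t0 _ _] := ut.
have [[ua uua ea] [ub uub eb]] := (ord_spec ut a0, ord_spec ut b0).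
by rewrite {1}ea {1}eb mulrACA -expfzDr // ord_unit_expz //; apply: unit_inM.
Qed.

Lemma ord_expz a (k : int) : a != 0 -> ord Q (a ^ k) = ord Q a * k.
Proof.
move=> a0; have [t ut] := dvrQ; have [u uu ea] := ord_spec ut a0.
by rewrite {1}ea expfzMl exprz_exp ord_unit_expz //; apply: unit_inXz.
Qed.

Lemma loc_ord_ge0 z : z != 0 -> loc Q z <-> 0 <= ord Q z.
Proof.
move=> z0; have [t ut] := dvrQ; have [u uu ez] := ord_spec ut z0.
by rewrite {1}ez; apply: loc_unit_expz.
Qed.

Lemma ordR_ge0 r : r != 0 -> 0 <= ordR Q r.
Proof. by move=> r0; apply/loc_ord_ge0; rewrite ?emb_eq0 //; apply: loc_emb. Qed.

Lemma ordR_gt0 r : r != 0 -> Q r <-> 0 < ordR Q r.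
Proof.
move=> r0; have er0 : emb r != 0 by rewrite emb_eq0.
have ord_inv : loc Q (emb r)^-1 <-> ordR Q r <= 0.
  by rewrite (loc_ord_ge0 (_ : _^-1 != 0)) ?invr_eq0 // -exprN1 ord_expz // mulrN1 oppr_ge0.
rewrite lt_def ordR_ge0 // andbT; split => [Qr | /eqP ord_neq0].
  by apply/eqP => ord0; apply: loc_emb_inv_nmem Qr => //; apply/ord_inv; rewrite ord0.
apply: contrapT => /loc_emb_inv /ord_inv ord_le0; apply: ord_neq0.
by apply/eqP; rewrite eq_le ord_le0 ordR_ge0.
Qed.

Lemma ordR_eq0 r : r != 0 -> ~ Q r -> ordR Q r = 0.
Proof.
move=> r0 Qr; apply/eqP; rewrite eq_le ordR_ge0 // andbT leNgt.
by apply/negP => /(ordR_gt0 r0).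
Qed.

Lemma ord_embXz (a b : R) (k l : int) : a != 0 -> b != 0 ->
  ord Q (emb a ^ k * emb b ^ l) = ordR Q a * k + ordR Q b * l.
Proof.
move=> a0 b0; have [ea0 eb0] : emb a != 0 /\ emb b != 0 by rewrite !emb_eq0.
by rewrite ordM ?expfz_neq0 // !ord_expz.
Qed.

End Valuation.

Lemma unitr_height_one (r : R) : r != 0 ->
  r \is a GRing.unit <-> forall Q, height_one Q -> ~ Q r.
Proof.
move=> r0; split=> [ur Q /height_one_prime pQ /(prime_ideal_nunit pQ) | r_avoids].
  by rewrite ur.
have [_ loc_int _] := kr.
have [s er] : exists s, (emb r)^-1 = emb s.
  by apply: loc_int => Q /r_avoids; apply: loc_emb_inv.
apply/unitrP; exists s; split; apply: emb_inj;
  by rewrite embM -er emb1 ?mulVf ?mulfV ?emb_eq0.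
Qed.

Lemma ord_ge0_emb (z : KR) : z != 0 ->
  (forall Q, height_one Q -> 0 <= ord Q z) -> exists r, z = emb r.
Proof.
move=> z0 z_ge0; have [_ loc_int _] := kr.
by apply: loc_int => Q hQ; apply/(loc_ord_ge0 hQ z0)/z_ge0.
Qed.

Lemma height_one_finite (x : R) : x != 0 -> exists (n : nat) (Qs : 'I_n -> R -> Prop),
  forall Q, height_one Q -> Q x -> exists i, Q = Qs i.
Proof.
have [_ _ fin] := kr; move=> /fin [s cover].
exists (size s), (fun i => nth (fun _ => False) s i) => Q hQ Qx.
have [_ [[i [lt_i ->]] /same_ideal_eq ->]] := cover Q hQ Qx.
by exists (Ordinal lt_i).
Qed.

Lemma principal_ext (D1 D2 : (R -> Prop) -> int) :
  (forall Q, height_one Q -> D1 Q = D2 Q) -> principal D1 -> principal D2.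
Proof. by move=> eD [z [z0 vz]]; exists z; split=> // Q hQ; rewrite -eD //; apply: vz. Qed.

Lemma principal0 : principal (fun _ : R -> Prop => 0).
Proof.
exists 1; split=> [|Q hQ]; first exact: oner_neq0.
by rewrite -(ord1 hQ); apply: vP_ord => //; apply: oner_neq0.
Qed.

Lemma principalD (D1 D2 : (R -> Prop) -> int) :
  principal D1 -> principal D2 -> principal (fun Q => D1 Q + D2 Q).
Proof.
move=> [z1 [z10 v1]] [z2 [z20 v2]]; exists (z1 * z2); split=> [|Q hQ].
  by rewrite mulf_neq0.
rewrite -(ord_vP hQ (v1 Q hQ)) -(ord_vP hQ (v2 Q hQ)) -ordM //.
by apply: vP_ord; rewrite // mulf_neq0.
Qed.

Lemma principalZ (D : (R -> Prop) -> int) (k : int) : principal D -> principal (fun Q => D Q * k).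
Proof.
move=> [z [z0 vz]]; exists (z ^ k); split=> [|Q hQ]; first exact: expfz_neq0.
rewrite -(ord_vP hQ (vz Q hQ)) -ord_expz //.
by apply: vP_ord; rewrite // expfz_neq0.
Qed.

Lemma principal_point (P : R -> Prop) (n : int) :
  multiple_principal P n -> principal (fun Q => if `[< Q = P >] then n else 0).
Proof.
move=> [z [z0 vPz vQz]]; exists z; split=> // Q hQ.
by case: asboolP => [-> // | neqQP]; apply: vQz => // /same_ideal_eq.
Qed.

Lemma finite_order_multiple (P : R -> Prop) :
  ~ infinite_order_class P -> exists2 n, (0 < n)%N & multiple_principal P n%:Z.
Proof. by move/existsNP => [n /not_implyP [n_gt0 /contrapT]]; exists n. Qed.

Lemma principal_multiple_of_finite_support (n : nat) (f : nat -> R -> Prop)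
    (D : (R -> Prop) -> int) :
  (forall P : R -> Prop, height_one P -> ~ infinite_order_class P) ->
  (forall P, D P != 0 -> height_one P /\ exists2 i, (i < n)%N & P = f i) ->
  exists2 m, (0 < m)%N & principal (fun Q => D Q * m%:Z).
Proof.
move=> fin_order; elim: n D => [|n IHn] D suppD.
  exists 1%N => //; apply: principal_ext principal0 => Q _.
  by case: (eqVneq (D Q) 0) => [-> //| /suppD [_ []]].
pose D' Q := if `[< Q = f n >] then 0 else D Q.
have [m' m'_gt0 prD'] : exists2 m', (0 < m')%N & principal (fun Q => D' Q * m'%:Z).
  apply: IHn => P; rewrite /D'; case: asboolP => // neqP /suppD [hP [i lt_i eP]].
  split=> //; exists i => //; rewrite ltn_neqAle -ltnS lt_i andbT.
  by apply: contra_not_neq neqP => ei; rewrite eP ei.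
case: (eqVneq (D (f n)) 0) => [Dn0 | /suppD [hn _]].
  exists m' => //; apply: principal_ext prD' => Q _.
  by rewrite /D'; case: asboolP => // ->; rewrite Dn0.
have [m0 m0_gt0 prn] := finite_order_multiple (fin_order _ hn).
exists (m' * m0)%N; first by rewrite muln_gt0 m'_gt0.
have := principalD (principalZ m0%:Z prD') (principalZ (D (f n) * m'%:Z) (principal_point prn)).
by apply: principal_ext => Q _; rewrite /D'; case: asboolP => [->|_]; rewrite PoszM; nia.
Qed.

Lemma cl_torsion_of_finite_orders :
  (forall P : R -> Prop, height_one P -> ~ infinite_order_class P) -> cl_torsion R.
Proof.
move=> fin_order D [_ suppD [s cover]].
suff [m m_gt0 prD] : exists2 m, (0 < m)%N & principal (fun Q => D Q * m%:Z).
  by exists m.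
apply: (@principal_multiple_of_finite_support (size s) (nth (fun _ => False) s) D fin_order).
move=> P DP; split; first exact: suppD.
by have [_ [[i [lt_i ->]] /same_ideal_eq ->]] := cover P DP; exists i.
Qed.

Lemma exists_infinite_order_class :
  ~ cl_torsion R -> exists2 P : R -> Prop, height_one P & infinite_order_class P.
Proof.
move=> ntor; apply: contrapT => noP; apply/ntor/cl_torsion_of_finite_orders.
by move=> P hP infP; apply: noP; exists P.
Qed.

Definition supp_sub (a b : R) := forall Q, height_one Q -> Q a -> Q b.

Lemma exists_min_support (P : R -> Prop) : height_one P -> exists y : R,
  [/\ y != 0, P y & forall c : R, c != 0 -> P c -> supp_sub c y -> supp_sub y c].
Proof.
move=> hP; have [y0 [y00 Py0]] : exists y, y != 0 /\ P y by case: hP.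
have [n [Qs cover]] := height_one_finite y00.
pose supp_idx c := [set i | `[< height_one (Qs i) /\ Qs i c >]].
pose cand c := [/\ c != 0, P c & supp_sub c y0].
have cand_y0 : cand y0 by split.
have [y [[y_0 Py y_y0] y_min]] := exists_minimizer (fun c => #|supp_idx c|) (ex_intro _ y0 cand_y0).
exists y; split=> // c c0 Pc c_y Q hQ Qy; apply: contrapT => Qc.
have /y_min : cand c by split=> // Q' hQ' /(c_y Q' hQ') /(y_y0 Q' hQ').
apply/negP; rewrite -ltnNge; apply/proper_card/properP; split.
  apply/subsetP => i; rewrite !inE => /asboolP [hi ci]; apply/asboolP.
  by split=> //; apply: c_y.
have [i eQ] := cover Q hQ (y_y0 Q hQ Qy).
by exists i; rewrite !inE -eQ; apply/asboolP => // -[].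
Qed.

Section MinimalSupport.
Variables (P : R -> Prop) (y : R).
Hypotheses (hP : height_one P) (y0 : y != 0) (Py : P y).
Hypothesis y_min : forall c : R, c != 0 -> P c -> supp_sub c y -> supp_sub y c.

Lemma ordR_supp_eq0 r Q : r != 0 -> supp_sub r y -> height_one Q -> ~ Q y -> ordR Q r = 0.
Proof. by move=> r0 r_y hQ Qy; apply: ordR_eq0 => // Qr; apply: Qy (r_y Q hQ Qr). Qed.

Lemma ord_eq0_at_min_support (z : KR) : z != 0 ->
  (forall Q, height_one Q -> 0 <= ord Q z) ->
  (forall Q, height_one Q -> ~ Q y -> ord Q z = 0) ->
  (exists Q0, [/\ height_one Q0, Q0 y & ord Q0 z = 0]) -> ord P z = 0.
Proof.
move=> z0 z_ge0 z_supp [Q0 [hQ0 Q0y zQ0]].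
have [c ez] := ord_ge0_emb z0 z_ge0; rewrite ez in z_supp zQ0 *.
have c0 : c != 0 by rewrite -emb_eq0 -ez.
apply/eqP/contraT => ordP_neq0.
have Pc : P c by apply/(ordR_gt0 hP c0); rewrite lt_def ordP_neq0 ordR_ge0.
have c_y : supp_sub c y.
  move=> Q hQ /(ordR_gt0 hQ c0); apply: contraPP => Qy.
  by rewrite /ordR z_supp // ltxx.
have /(ordR_gt0 hQ0 c0) := y_min c0 Pc c_y hQ0 Q0y.
by rewrite /ordR zQ0 ltxx.
Qed.

Lemma ordR_cross_eq (a b : R) Q1 : a != 0 -> b != 0 -> supp_sub a y -> supp_sub b y ->
  height_one Q1 -> Q1 y ->
  (forall Q, height_one Q -> Q y -> ordR Q b * ordR Q1 a <= ordR Q a * ordR Q1 b) ->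
  ordR P a * ordR Q1 b = ordR P b * ordR Q1 a.
Proof.
move=> a0 b0 a_y b_y hQ1 Q1y b_le_a.
pose z := emb a ^ ordR Q1 b * emb b ^ (- ordR Q1 a).
have ord_z Q : height_one Q -> ord Q z = ordR Q a * ordR Q1 b - ordR Q b * ordR Q1 a.
  by move=> hQ; rewrite ord_embXz // mulrN.
have out Q : height_one Q -> ~ Q y -> ord Q z = 0.
  by move=> hQ Qy; rewrite ord_z // !(ordR_supp_eq0 _ _ hQ Qy) // !mul0r subrr.
apply/eqP; rewrite -subr_eq0 -ord_z //; apply/eqP/ord_eq0_at_min_support => //.
- by rewrite mulf_neq0 ?expfz_neq0 ?emb_eq0.
- move=> Q hQ; case: (pselect (Q y)) => [Qy | /(out Q hQ) -> //].
  by rewrite ord_z // subr_ge0 b_le_a.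
- by exists Q1; rewrite ord_z // mulrC subrr.
Qed.

Lemma ordR_proportional r : r != 0 -> supp_sub r y ->
  forall Q, height_one Q -> ordR Q r * ordR P y = ordR P r * ordR Q y.
Proof.
move=> r0 r_y.
have y_gt0 Q : height_one Q -> Q y -> 0 < ordR Q y by move=> hQ /(ordR_gt0 hQ y0).
have [n [Qs cover]] := height_one_finite y0.
pose A := [pred i | `[< height_one (Qs i) /\ Qs i y >]].
pose F i : rat := (ordR (Qs i) r)%:~R / (ordR (Qs i) y)%:~R.
have F_le i j : A i -> A j ->
    (F i <= F j) = (ordR (Qs i) r * ordR (Qs j) y <= ordR (Qs j) r * ordR (Qs i) y).
  by move=> /asboolP [hi yi] /asboolP [hj yj]; rewrite ler_int_ratio ?y_gt0.
have [iP eP] := cover P hP Py.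
have AiP : A iP by apply/asboolP; rewrite -eP.
case: (arg_maxP F AiP) => i1 Ai1 F_max; case: (arg_minP F AiP) => i0 Ai0 F_min.
have {}F_max j : A j -> F j <= F i1 by apply: F_max.
have {}F_min j : A j -> F i0 <= F j by apply: F_min.
have [/asboolP [h1 y1] /asboolP [h0 y0']] := (Ai1, Ai0).
have index Q : height_one Q -> Q y -> exists2 j, A j & Q = Qs j.
  move=> hQ Qy; have [j eQ] := cover Q hQ Qy.
  by exists j; rewrite // inE; apply/asboolP; rewrite -eQ.
have e1 : F i1 = F iP.
  have cross : ordR P y * ordR (Qs i1) r = ordR P r * ordR (Qs i1) y.
    apply: ordR_cross_eq => // Q hQ Qy.
    by have [j Aj ->] := index Q hQ Qy; rewrite [X in _ <= X]mulrC -F_le // F_max.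
  by apply/le_anti; rewrite F_max // andbT F_le // -eP -cross mulrC.
have e0 : F i0 = F iP.
  have cross : ordR P r * ordR (Qs i0) y = ordR P y * ordR (Qs i0) r.
    apply: ordR_cross_eq => // Q hQ Qy.
    by have [j Aj ->] := index Q hQ Qy; rewrite [X in X <= _]mulrC -F_le // F_min.
  by apply/le_anti; rewrite F_min // F_le // -eP cross [leLHS]mulrC lexx.
move=> Q hQ; case: (pselect (Q y)) => [Qy | Qy]; last first.
  by rewrite !(ordR_supp_eq0 _ _ hQ Qy) ?mul0r ?mulr0.
have [j Aj ->] := index Q hQ Qy; rewrite eP.
apply/eqP; rewrite eq_le -F_le // -F_le //.
by rewrite -{1}e1 -e0 F_max ?F_min.
Qed.

Section Generator.
Variable x : R.
Hypotheses (x0 : x != 0) (Px : P x) (x_y : supp_sub x y).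
Hypothesis x_min : forall c : R, c != 0 -> P c -> supp_sub c y ->
  (`|ordR P x| <= `|ordR P c|)%N.

Lemma exists_quotient_power r (q : nat) : r != 0 -> supp_sub r y ->
  ordR P x * q%:Z <= ordR P r ->
  exists2 c, emb r = emb c * emb x ^+ q &
    forall Q, height_one Q -> ordR Q c * ordR P y = ordR Q y * (ordR P r - ordR P x * q%:Z).
Proof.
move=> r0 r_y le_qr; have y_gt0 : 0 < ordR P y by apply/(ordR_gt0 hP).
pose z := emb r ^ 1 * emb x ^ (- q%:Z).
have z0 : z != 0 by rewrite mulf_neq0 ?expfz_neq0 ?emb_eq0.
have ord_z Q : height_one Q -> ord Q z * ordR P y = ordR Q y * (ordR P r - ordR P x * q%:Z).
  move=> hQ; rewrite ord_embXz //.
  by have := ordR_proportional r0 r_y hQ; have := ordR_proportional x0 x_y hQ; nia.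
have [c ez] : exists c, z = emb c.
  apply: ord_ge0_emb => // Q hQ.
  by rewrite -(pmulr_lge0 _ y_gt0) ord_z // mulr_ge0 ?ordR_ge0 ?subr_ge0.
exists c; last by rewrite /ordR -ez; apply: ord_z.
by rewrite -ez /z expr1z -mulrA exprnP -expfzDr ?emb_eq0 // addNr expr0z mulr1.
Qed.

Lemma supp_sub_associate_power r : r != 0 -> supp_sub r y ->
  exists u (q : nat), u \is a GRing.unit /\ r = u * x ^+ q.
Proof.
move=> r0 r_y.
have [y_gt0 x_gt0] : 0 < ordR P y /\ 0 < ordR P x by split; apply/(ordR_gt0 hP).
pose b := `|ordR P x|%N; pose q := (`|ordR P r| %/ b)%N; pose m := (`|ordR P r| %% b)%N.
have b_gt0 : (0 < b)%N by rewrite absz_gt0 gt_eqF.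
have em : ordR P r - ordR P x * q%:Z = m.
  by rewrite -(gez0_abs (ordR_ge0 hP r0)) -(gez0_abs (ltW x_gt0)) (divn_eq `|ordR P r| b); lia.
have le_qr : ordR P x * q%:Z <= ordR P r by rewrite -subr_ge0 em.
have [c erc] := exists_quotient_power r0 r_y le_qr; rewrite em => ord_c.
have /andP [c0 _] : (c != 0) && (emb x ^+ q != 0).
  by rewrite -emb_eq0 -negb_or -mulf_eq0 -erc emb_eq0.
have [m0 | m_gt0] := posnP m.
  exists c, q; split; last by apply: emb_inj; rewrite embM embX.
  apply/(unitr_height_one c0) => Q hQ /(ordR_gt0 hQ c0).
  by have := ord_c Q hQ; rewrite m0; nia.
have ordPc : ordR P c = m by have := ord_c P hP; nia.
have c_y : supp_sub c y.
  move=> Q hQ /(ordR_gt0 hQ c0) c_gt0; apply: contrapT => /(ordR_eq0 hQ y0) yQ0.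
  by have := ord_c Q hQ; rewrite yQ0; nia.
have Pc : P c by apply/(ordR_gt0 hP c0); rewrite ordPc ltz_nat.
by have := x_min c0 Pc c_y; rewrite ordPc absz_nat -/b leqNgt ltn_pmod.
Qed.

Lemma generator_power_rigid : power_rigid x.
Proof.
move=> a b n ab; apply: supp_sub_associate_power.
  by have := expf_neq0 n x0; rewrite -ab mulf_eq0 negb_or => /andP [].
move=> Q hQ Qa; apply: x_y => //; apply: (@prime_idealX _ Q _ _ n); first by case: hQ.
by rewrite -ab; apply: prime_idealMr => //; case: hQ.
Qed.

End Generator.

Lemma exists_generator : exists x : R, [/\ x != 0, P x, supp_sub x y &
  forall c : R, c != 0 -> P c -> supp_sub c y -> (`|ordR P x| <= `|ordR P c|)%N].
Proof.
pose cand c := [/\ c != 0, P c & supp_sub c y].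
have cand_y : cand y by split.
have [x [[x0 Px x_y] x_min]] := exists_minimizer (fun c => `|ordR P c|%N) (ex_intro _ y cand_y).
by exists x; split=> // c c0 Pc c_y; apply: x_min.
Qed.

End MinimalSupport.

Lemma exists_power_rigid (P : R -> Prop) : height_one P ->
  exists x, [/\ P x, x != 0, x \isn't a GRing.unit & power_rigid x].
Proof.
move=> hP; have [y [y0 Py y_min]] := exists_min_support hP.
have [x [x0 Px x_y x_min]] := exists_generator y0 Py.
exists x; split=> //; first exact: (prime_ideal_nunit (height_one_prime hP) Px).
exact: (generator_power_rigid hP y0 Py y_min x0 Px x_y x_min).
Qed.

End KrullDomain.

Theorem mainTheorem4 (R : idomainType) :
  krull_domain R -> ~ cl_torsion R ->
  exists (P : R -> Prop) (x : R),
    [/\ height_one P, infinite_order_class P, P x, irreducible_elt x &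
        factors_uniquely (x ^+ 2)].
Proof.
move=> kr ntor.
have [P hP infP] := exists_infinite_order_class kr ntor.
have [x [Px x0 x_nunit x_rigid]] := exists_power_rigid kr hP.
exists P, x; split=> //; first exact: (rigid_irreducible x0 x_nunit x_rigid).
exact: (rigid_factors_uniquely x0 x_nunit x_rigid).
Qed.
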